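(* Let $k\ge1$ be an integer and let $a\in\mathbb{C}$ with $a\notin\{-1,-2,-3,\dots\}$. Then $${}_2F_1\!\left(\left.\begin{array}{c}a,\ a+k\\ a+1\end{array}\right|\frac12\right)=2^{a}\left[2^{k-1}-\frac{k-1}{a+1}\,{}_2F_1\!\left(\left.\begin{array}{c}2-k,\ a+1\\ a+2\end{array}\right|-1\right)\right],$$ equivalently $${}_2F_1\!\left(a,a+k;a+1;\tfrac12\right)=2^{a}\left(2^{k-1}-\sum_{i=1}^{k-1}\frac{(k-1)!}{(i-1)!\,(k-i-1)!\,(a+i)}\right).$$ (For $k\ge2$ the ${}_2F_1$ on the right is a finite sum with $k-1$ terms; for $k=1$ the bracket equals $1$.)
   Context: ${}_2F_1(a,b;c;z)=\sum_{m\ge0}\frac{(a)_m(b)_m}{m!\,(c)_m}z^m$ with $(\alpha)_m=\Gamma(\alpha+m)/\Gamma(\alpha)$; when an upper parameter is a nonpositive integer $-N$ the series terminates after the term $m=N$. *)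

From Stdlib Require Import Reals Arith Factorial.
Open Scope R_scope.

(* Complex numbers z = (Re z, Im z). *)
Definition Cplx : Type := (R * R)%type.
Definition RtoC (x : R) : Cplx := (x, 0).
Definition Cadd (x y : Cplx) : Cplx := (fst x + fst y, snd x + snd y).
Definition Copp (x : Cplx) : Cplx := (- fst x, - snd x).
Definition Cmul (x y : Cplx) : Cplx :=
  (fst x * fst y - snd x * snd y, fst x * snd y + snd x * fst y).
(* multiplicative inverse (only meaningful for x <> 0) *)
Definition Cinv (x : Cplx) : Cplx :=
  let d := fst x * fst x + snd x * snd x in (fst x / d, - snd x / d).
Fixpoint Cpow (x : Cplx) (n : nat) : Cplx :=
  match n with O => RtoC 1 | S n' => Cmul (Cpow x n') x end.
(* complex exponential; 2^a is defined as Cexp (a * ln 2) (principal value) *)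
Definition Cexp (z : Cplx) : Cplx := (exp (fst z) * cos (snd z), exp (fst z) * sin (snd z)).
Definition Cpow2 (a : Cplx) : Cplx := Cexp (Cmul a (RtoC (ln 2))).

Fixpoint poch (alpha : Cplx) (m : nat) : Cplx :=
  match m with
  | O => RtoC 1
  | S m' => Cmul (poch alpha m') (Cadd alpha (RtoC (INR m')))
  end.

Definition hyp2f1_term (a b c z : Cplx) (m : nat) : Cplx :=
  Cmul (Cmul (Cmul (poch a m) (poch b m))
             (Cinv (Cmul (RtoC (INR (fact m))) (poch c m))))
       (Cpow z m).

Fixpoint Csum (f : nat -> Cplx) (n : nat) : Cplx :=
  match n with O => RtoC 0 | S n' => Cadd (Csum f n') (f n') end.

Definition Cseries_sum (f : nat -> Cplx) (l : Cplx) : Prop :=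
  Un_cv (fun n => fst (Csum f n)) (fst l) /\ Un_cv (fun n => snd (Csum f n)) (snd l).

(* For b = a + k the series at z = 1/2 are linked by the contiguous relation
     F(a, b+1; a+1) = F(a, b; a+1) + a/(2(a+1)) F(a+1, b+1; a+2),
   which holds termwise because (b+1)_(m+1) = (b)_(m+1) + (m+1) (b+1)_m.  Inducting on k, for all
   a at once, the sum is 2^a times sum_i C(k-1, i) a/(a+i) (the i = 0 weight being 1), and this
   rearranges into the stated form.  The base case k = 1 is the binomial series
   sum_m (a)_m/m! 2^-m = 2^a: the truncation F_N satisfies (1-t) F_N' - a F_N = -N c_N t^(N-1),
   so F_N(t) (1-t)^a has a derivative of size O(|c_N| N 2^-N) on [0, 1/2], and the mean value
   inequality gives the convergence. *)

From Pilot Require Import Defs.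
From Stdlib Require Import Reals Factorial Lia Lra FunctionalExtensionality.
From Coquelicot Require Import Coquelicot.
Open Scope R_scope.

Lemma Cinv_Coquelicot (x : Cplx) : Defs.Cinv x = Cinv x.
Proof. destruct x as [u v]; unfold Defs.Cinv, Cinv; simpl; f_equal; f_equal; ring. Qed.

Lemma Cpow_Coquelicot (x : Cplx) (n : nat) : Defs.Cpow x n = Cpow x n.
Proof. induction n as [|n IH]; [reflexivity|]. simpl; rewrite IH; apply Cmult_comm. Qed.

Ltac to_C :=
  change Defs.Cmul with Cmult in *; change Defs.Cadd with Cplus in *;
  change Defs.Copp with Copp in *; change Defs.RtoC with RtoC in *;
  rewrite ?Cinv_Coquelicot, ?Cpow_Coquelicot in *;
  try match goal with |- @eq Cplx ?x ?y => change (@eq C x y) end.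

Lemma RtoC_neq0 (x : R) : x <> 0 -> RtoC x <> 0%C.
Proof. intros Hx E; apply Hx; now injection E. Qed.

Lemma INR_fact_S_C (n : nat) : RtoC (INR (fact (S n))) = (INR (S n) * INR (fact n))%C.
Proof. now rewrite fact_simpl, mult_INR, RtoC_mult. Qed.

(** * Finite sums and series *)

Lemma Csum_O (f : nat -> C) : Csum f O = RtoC 0.
Proof. reflexivity. Qed.

Lemma Csum_S (f : nat -> C) (n : nat) : Csum f (S n) = (Csum f n + f n)%C.
Proof. reflexivity. Qed.

Lemma Csum_Sl (f : nat -> C) (n : nat) :
  Csum f (S n) = (f O + Csum (fun i => f (S i)) n)%C.
Proof.
  induction n as [|n IH]; rewrite Csum_S; [simpl; to_C; ring|].
  rewrite IH, Csum_S; to_C; ring.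
Qed.

Lemma Csum_ext (f g : nat -> C) (n : nat) :
  (forall i, (i < n)%nat -> f i = g i) -> Csum f n = Csum g n.
Proof.
  induction n as [|n IH]; intros Hfg; [reflexivity|].
  rewrite !Csum_S, IH, Hfg; auto.
Qed.

Lemma Csum_add (f g : nat -> C) (n : nat) :
  Csum (fun i => f i + g i)%C n = (Csum f n + Csum g n)%C.
Proof. induction n as [|n IH]; [simpl; to_C; ring|]. rewrite !Csum_S, IH; to_C; ring. Qed.

Lemma Csum_sub (f g : nat -> C) (n : nat) :
  Csum (fun i => f i - g i)%C n = (Csum f n - Csum g n)%C.
Proof. induction n as [|n IH]; [simpl; to_C; ring|]. rewrite !Csum_S, IH; to_C; ring. Qed.

Lemma Csum_scal (c : C) (f : nat -> C) (n : nat) :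
  Csum (fun i => c * f i)%C n = (c * Csum f n)%C.
Proof. induction n as [|n IH]; [simpl; to_C; ring|]. rewrite !Csum_S, IH; to_C; ring. Qed.

Lemma Cseries_sum_is_lim_seq (f : nat -> C) (l : C) :
  Cseries_sum f l <->
  is_lim_seq (fun n => fst (Csum f n)) (fst l) /\ is_lim_seq (fun n => snd (Csum f n)) (snd l).
Proof. unfold Cseries_sum; rewrite !is_lim_seq_Reals; tauto. Qed.

Lemma Cseries_sum_ext (f g : nat -> C) (l l' : C) :
  (forall m, f m = g m) -> l = l' -> Cseries_sum f l -> Cseries_sum g l'.
Proof.
  intros Hfg <-; replace g with f; [easy|].
  now apply functional_extensionality.
Qed.

Lemma Cseries_sum_add (f g : nat -> C) (l1 l2 : C) :
  Cseries_sum f l1 -> Cseries_sum g l2 -> Cseries_sum (fun m => f m + g m)%C (l1 + l2)%C.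
Proof.
  rewrite !Cseries_sum_is_lim_seq; intros [Hf1 Hf2] [Hg1 Hg2].
  split; eapply is_lim_seq_ext;
    try (intros n; rewrite Csum_add; reflexivity); now apply is_lim_seq_plus'.
Qed.

Lemma Cseries_sum_scal (c : C) (f : nat -> C) (l : C) :
  Cseries_sum f l -> Cseries_sum (fun m => c * f m)%C (c * l)%C.
Proof.
  rewrite !Cseries_sum_is_lim_seq; intros [Hf1 Hf2].
  split; eapply is_lim_seq_ext; try (intros n; rewrite Csum_scal; reflexivity); simpl.
  - apply is_lim_seq_minus'; apply is_lim_seq_mult'; try apply is_lim_seq_const; assumption.
  - apply is_lim_seq_plus'; apply is_lim_seq_mult'; try apply is_lim_seq_const; assumption.
Qed.

Definition Cshift (f : nat -> C) (m : nat) : C :=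
  match m with O => RtoC 0 | S j => f j end.

Lemma Cseries_sum_shift (f : nat -> C) (l : C) :
  Cseries_sum f l -> Cseries_sum (Cshift f) l.
Proof.
  assert (Hsum : forall n, Csum (Cshift f) (S n) = Csum f n).
  { induction n as [|n IH]; rewrite Csum_S; [simpl; to_C; ring | now rewrite IH]. }
  rewrite !Cseries_sum_is_lim_seq; intros [Hf1 Hf2].
  split; apply is_lim_seq_incr_1; eapply is_lim_seq_ext;
    try (intros n; rewrite Hsum; reflexivity); assumption.
Qed.

Lemma Cseries_sum_of_Cmod_bound (f : nat -> C) (l : C) (e : nat -> R) :
  is_lim_seq e 0 -> (forall n, Cmod (Csum f (S n) - l) <= e n) -> Cseries_sum f l.
Proof.
  intros He Hbound.
  assert (Hsq : forall (x : nat -> R) (y : R), (forall n, Rabs (x n - y) <= e n) ->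
            is_lim_seq x y).
  { intros x y Hx.
    apply is_lim_seq_le_le with (fun n => y - e n) (fun n => y + e n).
    - intros n; specialize (Hx n); apply Rabs_le_between' in Hx; lra.
    - replace (Finite y) with (Finite (y - 0)) by (f_equal; ring).
      apply is_lim_seq_minus'; [apply is_lim_seq_const | exact He].
    - replace (Finite y) with (Finite (y + 0)) by (f_equal; ring).
      apply is_lim_seq_plus'; [apply is_lim_seq_const | exact He]. }
  apply Cseries_sum_is_lim_seq; split; apply is_lim_seq_incr_1, Hsq; intros n;
    eapply Rle_trans; try apply (Hbound n);
    eapply Rle_trans; try apply Rmax_Cmod; simpl; [apply Rmax_l | apply Rmax_r].
Qed.

(** * Pochhammer symbols and hypergeometric terms *)

Lemma poch_S (a : C) (m : nat) : poch a (S m) = (poch a m * (a + INR m))%C.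
Proof. reflexivity. Qed.

Lemma poch_Sl (a : C) (m : nat) : poch a (S m) = (a * poch (a + 1) m)%C.
Proof.
  induction m as [|m IH]; rewrite poch_S; [simpl; to_C; ring|].
  rewrite IH, poch_S, S_INR, RtoC_plus; to_C; ring.
Qed.

Lemma poch_neq0 (a : C) (m : nat) :
  (forall j, (j < m)%nat -> (a + INR j)%C <> 0%C) -> poch a m <> RtoC 0.
Proof.
  induction m as [|m IH]; intros Ha; [apply RtoC_neq0, R1_neq_R0|].
  rewrite poch_S; apply Cmult_neq_0; auto.
Qed.

Lemma poch_pascal (b : C) (n : nat) :
  poch (b + 1)%C (S n) = (poch b (S n) + INR (S n) * poch (b + 1) n)%C.
Proof. rewrite (poch_Sl b), poch_S, S_INR, RtoC_plus; to_C; ring. Qed.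

Lemma hyp2f1_term_unfold (a b c z : C) (m : nat) :
  hyp2f1_term a b c z m = (poch a m * poch b m / (INR (fact m) * poch c m) * z ^ m)%C.
Proof. unfold hyp2f1_term; to_C; reflexivity. Qed.

Definition not_neg_int (a : C) : Prop := forall n : nat, a <> RtoC (- INR (S n)).

Lemma not_neg_int_add_neq0 (a : C) (j : nat) : not_neg_int a -> (a + INR (S j))%C <> 0%C.
Proof.
  intros Ha E; apply (Ha j); to_C.
  transitivity (a + INR (S j) - INR (S j))%C; [ring | rewrite E, RtoC_opp; ring].
Qed.

Lemma not_neg_int_succ (a : C) : not_neg_int a -> not_neg_int (a + 1)%C.
Proof.
  intros Ha n E; apply (Ha (S n)); to_C.
  rewrite S_INR, Ropp_plus_distr, RtoC_plus, <- E, RtoC_opp; ring.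
Qed.

Lemma not_neg_int_succ_add_neq0 (a : C) (j : nat) :
  not_neg_int a -> (a + 1 + INR j)%C <> 0%C.
Proof.
  intros Ha; replace (a + 1 + INR j)%C with (a + INR (S j))%C.
  - now apply not_neg_int_add_neq0.
  - rewrite S_INR, RtoC_plus; to_C; ring.
Qed.

Lemma INR_fact_neq0_C (n : nat) : RtoC (INR (fact n)) <> 0%C.
Proof. apply RtoC_neq0, INR_fact_neq_0. Qed.

Lemma INR_S_neq0_C (n : nat) : RtoC (INR (S n)) <> 0%C.
Proof. apply RtoC_neq0, not_0_INR; lia. Qed.

(** * Complex powers and derivatives along the real line *)

Lemma Cexp_add (z w : C) : Defs.Cexp (z + w)%C = (Defs.Cexp z * Defs.Cexp w)%C.
Proof.
  unfold Defs.Cexp, Cplus, Cmult; simpl.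
  rewrite exp_plus, cos_plus, sin_plus; f_equal; ring.
Qed.

Lemma Cexp_0 : Defs.Cexp (RtoC 0) = RtoC 1.
Proof. unfold Defs.Cexp; simpl; rewrite exp_0, cos_0, sin_0; unfold RtoC; f_equal; ring. Qed.

Lemma Cmod_Cexp (z : C) : Cmod (Defs.Cexp z) = exp (fst z).
Proof.
  unfold Cmod, Defs.Cexp; simpl fst; simpl snd.
  pose proof (sin2_cos2 (snd z)) as Hsc; unfold Rsqr in Hsc.
  transitivity (sqrt (exp (fst z) ^ 2)); [f_equal | apply sqrt_pow2; left; apply exp_pos].
  transitivity (exp (fst z) ^ 2 * (sin (snd z) * sin (snd z) + cos (snd z) * cos (snd z)));
    [ring | rewrite Hsc; ring].
Qed.

(* t^a for a real base t > 0; [Cpow2 a] is [Rcpow 2 a] by definition. *)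
Definition Rcpow (t : R) (a : C) : C := Defs.Cexp (a * ln t)%C.

Lemma Rcpow_mul_l (s t : R) (a : C) :
  0 < s -> 0 < t -> Rcpow (s * t) a = (Rcpow s a * Rcpow t a)%C.
Proof.
  intros Hs Ht; unfold Rcpow.
  rewrite ln_mult, RtoC_plus, Cmult_plus_distr_l, Cexp_add; auto.
Qed.

Lemma Rcpow_1_l (a : C) : Rcpow 1 a = RtoC 1.
Proof. unfold Rcpow; rewrite ln_1, Cmult_0_r; apply Cexp_0. Qed.

Lemma Rcpow_succ (t : R) (a : C) : 0 < t -> Rcpow t (a + 1) = (t * Rcpow t a)%C.
Proof.
  intros Ht; unfold Rcpow; rewrite Cmult_plus_distr_r, Cexp_add, Cmult_1_l, Cmult_comm.
  f_equal; unfold Defs.Cexp; simpl; rewrite exp_ln, cos_0, sin_0 by assumption.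
  unfold RtoC; f_equal; ring.
Qed.

Lemma Cmod_Rcpow (t : R) (a : C) : Cmod (Rcpow t a) = exp (fst a * ln t).
Proof. unfold Rcpow; rewrite Cmod_Cexp; simpl; f_equal; ring. Qed.

Definition has_Cderive (f : R -> C) (u : C) (x : R) : Prop :=
  derivable_pt_lim (fun t => fst (f t)) x (fst u) /\
  derivable_pt_lim (fun t => snd (f t)) x (snd u).

Lemma has_Cderive_eq (f : R -> C) (u v : C) (x : R) :
  has_Cderive f u x -> u = v -> has_Cderive f v x.
Proof. now intros H <-. Qed.

Lemma has_Cderive_const (c : C) (x : R) : has_Cderive (fun _ => c) (RtoC 0) x.
Proof. split; apply derivable_pt_lim_const. Qed.

Lemma has_Cderive_RtoC (r : R -> R) (r' x : R) :
  derivable_pt_lim r x r' -> has_Cderive (fun t => RtoC (r t)) (RtoC r') x.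
Proof. split; [assumption | apply derivable_pt_lim_const]. Qed.

Lemma has_Cderive_add (f g : R -> C) (u v : C) (x : R) :
  has_Cderive f u x -> has_Cderive g v x -> has_Cderive (fun t => f t + g t)%C (u + v)%C x.
Proof. intros [Hf1 Hf2] [Hg1 Hg2]; split; now apply derivable_pt_lim_plus. Qed.

Lemma has_Cderive_mul (f g : R -> C) (u v : C) (x : R) :
  has_Cderive f u x -> has_Cderive g v x ->
  has_Cderive (fun t => f t * g t)%C (u * g x + f x * v)%C x.
Proof.
  intros [Hf1 Hf2] [Hg1 Hg2]; split.
  - replace (fst (u * g x + f x * v)%C)
      with (fst u * fst (g x) + fst (f x) * fst v - (snd u * snd (g x) + snd (f x) * snd v))
      by (simpl; ring).
    exact (derivable_pt_lim_minus _ _ _ _ _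
             (derivable_pt_lim_mult _ _ _ _ _ Hf1 Hg1) (derivable_pt_lim_mult _ _ _ _ _ Hf2 Hg2)).
  - replace (snd (u * g x + f x * v)%C)
      with (fst u * snd (g x) + fst (f x) * snd v + (snd u * fst (g x) + snd (f x) * fst v))
      by (simpl; ring).
    exact (derivable_pt_lim_plus _ _ _ _ _
             (derivable_pt_lim_mult _ _ _ _ _ Hf1 Hg2) (derivable_pt_lim_mult _ _ _ _ _ Hf2 Hg1)).
Qed.

Lemma has_Cderive_Cexp (h : R -> C) (u : C) (x : R) :
  has_Cderive h u x -> has_Cderive (fun t => Defs.Cexp (h t)) (Defs.Cexp (h x) * u)%C x.
Proof.
  intros [Hh1 Hh2]; split.
  - replace (fst (Defs.Cexp (h x) * u)%C)
      with (exp (fst (h x)) * fst u * cos (snd (h x))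
            + exp (fst (h x)) * (- sin (snd (h x)) * snd u)) by (unfold Defs.Cexp; simpl; ring).
    exact (derivable_pt_lim_mult (comp exp (fun t => fst (h t))) (comp cos (fun t => snd (h t)))
             _ _ _ (derivable_pt_lim_comp _ _ _ _ _ Hh1 (derivable_pt_lim_exp _))
             (derivable_pt_lim_comp _ _ _ _ _ Hh2 (derivable_pt_lim_cos _))).
  - replace (snd (Defs.Cexp (h x) * u)%C)
      with (exp (fst (h x)) * fst u * sin (snd (h x))
            + exp (fst (h x)) * (cos (snd (h x)) * snd u)) by (unfold Defs.Cexp; simpl; ring).
    exact (derivable_pt_lim_mult (comp exp (fun t => fst (h t))) (comp sin (fun t => snd (h t)))
             _ _ _ (derivable_pt_lim_comp _ _ _ _ _ Hh1 (derivable_pt_lim_exp _))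
             (derivable_pt_lim_comp _ _ _ _ _ Hh2 (derivable_pt_lim_sin _))).
Qed.

Lemma Cmod_sub_le_deriv_bound (f f' : R -> C) (x y B : R) :
  x < y ->
  (forall t, x <= t <= y -> has_Cderive f (f' t) t) ->
  (forall t, x <= t <= y -> Cmod (f' t) <= B) ->
  Cmod (f y - f x)%C <= sqrt 2 * (B * (y - x)).
Proof.
  intros Hxy Hder Hbound.
  assert (Hcomp : forall p : C -> R, (p = fst \/ p = snd) ->
            Rabs (p (f y) - p (f x)) <= B * (y - x)).
  { intros p Hp.
    destruct (MVT_cor2 (fun t => p (f t)) (fun t => p (f' t)) x y) as [c [Hc Hcxy]];
      [assumption | intros t Ht; destruct Hp as [-> | ->]; apply Hder, Ht |].
    rewrite Hc, Rabs_mult, (Rabs_pos_eq (y - x)) by lra.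
    apply Rmult_le_compat_r; [lra|].
    eapply Rle_trans; [| apply (Hbound c); lra].
    eapply Rle_trans; [| apply Rmax_Cmod].
    destruct Hp as [-> | ->]; [apply Rmax_l | apply Rmax_r]. }
  eapply Rle_trans; [apply Cmod_2Rmax|].
  apply Rmult_le_compat_l; [apply sqrt_pos|].
  apply Rmax_lub; [apply (Hcomp fst) | apply (Hcomp snd)]; auto.
Qed.

(** * The binomial series at 1/2 *)

Definition binom_coef (a : C) (m : nat) : C := (poch a m / INR (fact m))%C.

Lemma binom_coef_O (a : C) : binom_coef a O = RtoC 1.
Proof. unfold binom_coef; simpl; to_C; field; apply RtoC_neq0, R1_neq_R0. Qed.

Lemma binom_coef_succ (a : C) (N : nat) :
  (binom_coef a (S N) * INR (S N) = binom_coef a N * (a + INR N))%C.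
Proof.
  unfold binom_coef; rewrite poch_S, INR_fact_S_C.
  pose proof (INR_fact_neq0_C N); pose proof (INR_S_neq0_C N); to_C; field; auto.
Qed.

Definition binom_trunc (a : C) (N : nat) (t : R) : C :=
  Csum (fun m => binom_coef a m * RtoC (t ^ m))%C N.

Definition binom_trunc' (a : C) (N : nat) (t : R) : C :=
  Csum (fun m => binom_coef a m * RtoC (INR m * t ^ pred m))%C N.

Lemma has_Cderive_binom_trunc (a : C) (N : nat) (t : R) :
  has_Cderive (binom_trunc a N) (binom_trunc' a N t) t.
Proof.
  induction N as [|N IH]; [apply has_Cderive_const|].
  eapply has_Cderive_eq.
  - eapply (has_Cderive_add _ (fun s => binom_coef a N * RtoC (s ^ N))%C _ _ _ IH).
    apply (has_Cderive_mul (fun _ => binom_coef a N) (fun s => RtoC (s ^ N))).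
    + apply has_Cderive_const.
    + apply has_Cderive_RtoC, derivable_pt_lim_pow.
  - unfold binom_trunc'; rewrite Csum_S; to_C; ring.
Qed.

(* The truncation solves (1 - t) F' = a F up to a single top-degree term. *)
Lemma binom_trunc_defect (a : C) (N : nat) (t : R) :
  (RtoC (1 - t) * binom_trunc' a N t - a * binom_trunc a N t
   = - (binom_coef a N * RtoC (INR N * t ^ pred N)))%C.
Proof.
  induction N as [|N IH].
  - unfold binom_trunc, binom_trunc'; simpl; rewrite Rmult_0_l; to_C; ring.
  - unfold binom_trunc, binom_trunc' in *; rewrite !Csum_S.
    assert (Hstep : (RtoC (1 - t) * RtoC (INR N * t ^ pred N)
                     = RtoC (INR N * t ^ pred N) - INR N * RtoC (t ^ N))%C).
    { rewrite <- !RtoC_mult, <- RtoC_minus; f_equal; destruct N; simpl; ring. }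
    transitivity (RtoC (1 - t) * Csum (fun m => binom_coef a m * RtoC (INR m * t ^ pred m)) N
                  - a * Csum (fun m => binom_coef a m * RtoC (t ^ m)) N
                  + binom_coef a N * (RtoC (1 - t) * RtoC (INR N * t ^ pred N))
                  - a * binom_coef a N * RtoC (t ^ N))%C; [to_C; ring|].
    rewrite IH, Hstep; simpl pred.
    rewrite (RtoC_mult (INR (S N))), Cmult_assoc, binom_coef_succ; to_C; ring.
Qed.

Lemma has_Cderive_Rcpow_1_sub (a : C) (t : R) :
  t < 1 -> has_Cderive (fun s => Rcpow (1 - s) a) (- (a * Rcpow (1 - t) a / RtoC (1 - t)))%C t.
Proof.
  intros Ht; eapply has_Cderive_eq.
  - apply (has_Cderive_Cexp (fun s => a * RtoC (ln (1 - s)))%C).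
    apply (has_Cderive_mul (fun _ => a) (fun s => RtoC (ln (1 - s)))).
    + apply has_Cderive_const.
    + apply has_Cderive_RtoC, (derivable_pt_lim_comp (fun s => 1 - s) ln).
      * apply (derivable_pt_lim_minus (fct_cte 1) id);
          [apply derivable_pt_lim_const | apply derivable_pt_lim_id].
      * apply derivable_pt_lim_ln; lra.
  - assert (RtoC (1 - t) <> 0%C) by (apply RtoC_neq0; lra).
    replace (/ (1 - t) * (0 - 1)) with (- / (1 - t)) by ring.
    rewrite RtoC_opp, RtoC_inv by lra.
    change (Defs.Cexp (a * RtoC (ln (1 - t)))%C) with (Rcpow (1 - t) a); to_C; field; auto.
Qed.

Lemma Cmod_Rcpow_1_sub_le (a : C) (t : R) :
  0 <= t <= 1 / 2 -> Cmod (Rcpow (1 - t) a) <= exp (Rabs (fst a) * ln 2).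
Proof.
  intros Ht; rewrite Cmod_Rcpow.
  assert (Hln : Rabs (ln (1 - t)) <= ln 2).
  { assert (ln (1 - t) <= 0) by (rewrite <- ln_1; apply ln_le; lra).
    assert (ln (/ 2) <= ln (1 - t)) by (apply ln_le; lra).
    rewrite ln_Rinv in * by lra; rewrite Rabs_left1; lra. }
  assert (Hexp : fst a * ln (1 - t) <= Rabs (fst a) * ln 2).
  { eapply Rle_trans; [apply Rle_abs|].
    rewrite Rabs_mult; apply Rmult_le_compat_l; [apply Rabs_pos | exact Hln]. }
  destruct (Rle_lt_or_eq_dec _ _ Hexp) as [Hlt | ->]; [left; now apply exp_increasing | lra].
Qed.

(* [binom_trunc a N t * (1 - t)^a] would be constantly 1 for the full series. *)
Definition binom_trunc_normalized (a : C) (N : nat) (t : R) : C :=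
  (binom_trunc a N t * Rcpow (1 - t) a)%C.

Lemma has_Cderive_binom_trunc_normalized (a : C) (N : nat) (t : R) :
  t < 1 ->
  has_Cderive (binom_trunc_normalized a N)
    (- (Rcpow (1 - t) a * binom_coef a N * RtoC (INR N * t ^ pred N / (1 - t))))%C t.
Proof.
  intros Ht; eapply has_Cderive_eq.
  - apply has_Cderive_mul;
      [apply has_Cderive_binom_trunc | now apply has_Cderive_Rcpow_1_sub].
  - assert (RtoC (1 - t) <> 0%C) by (apply RtoC_neq0; lra).
    transitivity (Rcpow (1 - t) a
                  * (RtoC (1 - t) * binom_trunc' a N t - a * binom_trunc a N t) / RtoC (1 - t))%C;
      [to_C; field; auto|].
    rewrite binom_trunc_defect, RtoC_div, RtoC_mult by lra; to_C; field; auto.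
Qed.

Lemma Cmod_binom_trunc_normalized_deriv_le (a : C) (N : nat) (t : R) :
  0 <= t <= 1 / 2 ->
  Cmod (- (Rcpow (1 - t) a * binom_coef a N * RtoC (INR N * t ^ pred N / (1 - t))))%C
  <= exp (Rabs (fst a) * ln 2) * Cmod (binom_coef a N) * (2 * (INR N * (1 / 2) ^ pred N)).
Proof.
  intros Ht; rewrite Cmod_opp, !Cmod_mult, Cmod_R.
  assert (Hpow : 0 <= t ^ pred N <= (1 / 2) ^ pred N)
    by (split; [apply pow_le | apply pow_incr]; lra).
  assert (Hinv : 0 < / (1 - t) <= 2).
  { split; [apply Rinv_0_lt_compat; lra|].
    replace 2 with (/ (1 / 2)) by field; apply Rinv_le_contravar; lra. }
  pose proof (pos_INR N).
  apply Rmult_le_compat; try apply Rmult_le_pos; try apply Cmod_ge_0; try apply Rabs_pos.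
  - apply Rmult_le_compat_r; [apply Cmod_ge_0 | now apply Cmod_Rcpow_1_sub_le].
  - unfold Rdiv; rewrite Rabs_pos_eq by (apply Rmult_le_pos; [apply Rmult_le_pos|]; lra).
    rewrite Rmult_comm; apply Rmult_le_compat; try apply Rmult_le_pos; try lra.
    apply Rmult_le_compat_l; lra.
Qed.

(* The coefficients (A)_N / N! of (1 - t)^(-A), which dominate |binom_coef a N| for A = |a| + 1. *)
Fixpoint binom_majorant (A : R) (N : nat) : R :=
  match N with O => 1 | S n => binom_majorant A n * (A + INR n) / INR (S n) end.

Lemma binom_majorant_pos (A : R) (N : nat) : 0 < A -> 0 < binom_majorant A N.
Proof.
  intros HA; induction N as [|N IH]; cbn [binom_majorant]; [lra|].
  pose proof (pos_INR N); pose proof (lt_0_INR (S N) (Nat.lt_0_succ N)).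
  apply Rdiv_lt_0_compat; [apply Rmult_lt_0_compat|]; lra.
Qed.

Lemma Cmod_binom_coef_le (a : C) (N : nat) : Cmod (binom_coef a N) <= binom_majorant (Cmod a + 1) N.
Proof.
  induction N as [|N IH]; [rewrite binom_coef_O, Cmod_1; simpl; lra|].
  pose proof (lt_0_INR (S N) (Nat.lt_0_succ N)).
  assert (E : binom_coef a (S N) = (binom_coef a N * (a + INR N) * RtoC (/ INR (S N)))%C).
  { rewrite <- binom_coef_succ, RtoC_inv by lra.
    pose proof (INR_S_neq0_C N); to_C; field; auto. }
  rewrite E, !Cmod_mult, Cmod_R, Rabs_pos_eq by (left; apply Rinv_0_lt_compat; lra).
  cbn [binom_majorant]; unfold Rdiv.
  apply Rmult_le_compat_r; [left; apply Rinv_0_lt_compat; lra|].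
  apply Rmult_le_compat; try apply Cmod_ge_0; [assumption|].
  eapply Rle_trans; [apply Cmod_triangle|].
  rewrite Cmod_R, Rabs_pos_eq by apply pos_INR; lra.
Qed.

(* The terms are those of a series converging by d'Alembert's test, with ratio tending to 1/2. *)
Lemma is_lim_seq_binom_majorant_geom (A : R) :
  0 < A -> is_lim_seq (fun N => binom_majorant A N * (INR N * (1 / 2) ^ pred N)) 0.
Proof.
  intros HA; apply is_lim_seq_incr_1.
  set (s := fun n => binom_majorant A (S n) * (INR (S n) * (1 / 2) ^ pred (S n))).
  assert (Hs : forall n, 0 < s n).
  { intros n; apply Rmult_lt_0_compat; [now apply binom_majorant_pos|].
    apply Rmult_lt_0_compat; [apply lt_0_INR; lia | apply pow_lt; lra]. }
  assert (Hratio : forall n, Rabs (s (S n) / s n) = 1 / 2 + A / 2 * / INR (S n)).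
  { intros n; rewrite Rabs_pos_eq by (left; apply Rdiv_lt_0_compat; apply Hs).
    unfold s; simpl pred; change (binom_majorant A (S (S n)))
      with (binom_majorant A (S n) * (A + INR (S n)) / INR (S (S n))).
    pose proof (binom_majorant_pos A (S n) HA).
    pose proof (lt_0_INR (S n) (Nat.lt_0_succ n)).
    pose proof (lt_0_INR (S (S n)) (Nat.lt_0_succ (S n))).
    pose proof (pow_lt (1 / 2) n ltac:(lra)).
    simpl pow; field; repeat split; lra. }
  assert (Hex : ex_series (fun n => Rabs (s n))).
  { apply (ex_series_DAlembert s (1 / 2)); [lra | intros n; pose proof (Hs n); lra |].
    eapply is_lim_seq_ext; [intros n; symmetry; apply Hratio|].
    replace (Finite (1 / 2)) with (Finite (1 / 2 + A / 2 * 0)) by (f_equal; ring).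
    apply is_lim_seq_plus'; [apply is_lim_seq_const|].
    apply is_lim_seq_mult'; [apply is_lim_seq_const|].
    apply (is_lim_seq_incr_1 (fun n => / INR n)).
    exact (is_lim_seq_inv INR p_infty is_lim_seq_INR ltac:(discriminate)). }
  eapply is_lim_seq_ext; [| apply (ex_series_lim_0 _ Hex)].
  intros n; apply Rabs_pos_eq; left; apply Hs.
Qed.

Lemma is_lim_seq_Cmod_binom_coef_geom (a : C) :
  is_lim_seq (fun N => Cmod (binom_coef a N) * (INR N * (1 / 2) ^ pred N)) 0.
Proof.
  apply is_lim_seq_le_le with (fun _ => 0)
    (fun N => binom_majorant (Cmod a + 1) N * (INR N * (1 / 2) ^ pred N)).
  - intros N; assert (0 <= INR N * (1 / 2) ^ pred N)
      by (apply Rmult_le_pos; [apply pos_INR | apply pow_le; lra]).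
    split; [apply Rmult_le_pos; [apply Cmod_ge_0 | assumption]|].
    apply Rmult_le_compat_r; [assumption | apply Cmod_binom_coef_le].
  - apply is_lim_seq_const.
  - apply is_lim_seq_binom_majorant_geom; pose proof (Cmod_ge_0 a); lra.
Qed.

Lemma binom_trunc_normalized_0 (a : C) (N : nat) : binom_trunc_normalized a (S N) 0 = RtoC 1.
Proof.
  unfold binom_trunc_normalized, binom_trunc; rewrite Csum_Sl, Rminus_0_r, Rcpow_1_l, binom_coef_O.
  rewrite (Csum_ext _ (fun _ => RtoC 0)) by (intros i _; rewrite pow_ne_zero by lia; to_C; ring).
  assert (Hzero : forall n, Csum (fun _ => RtoC 0) n = RtoC 0)
    by (induction n as [|n IH]; [reflexivity | rewrite Csum_S, IH; to_C; ring]).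
  rewrite Hzero; simpl; to_C; ring.
Qed.

Theorem binom_series_half (a : C) :
  Cseries_sum (fun m => binom_coef a m * RtoC (1 / 2) ^ m)%C (Rcpow 2 a).
Proof.
  set (K := sqrt 2 * exp (Rabs (fst a) * ln 2) * Cmod (Rcpow 2 a)).
  apply Cseries_sum_of_Cmod_bound with
    (e := fun n => K * (Cmod (binom_coef a (S n)) * (INR (S n) * (1 / 2) ^ pred (S n)))).
  { replace (Finite 0) with (Finite (K * 0)) by (f_equal; ring).
    apply is_lim_seq_mult'; [apply is_lim_seq_const|].
    apply (is_lim_seq_incr_1 (fun N => Cmod (binom_coef a N) * (INR N * (1 / 2) ^ pred N))).
    apply is_lim_seq_Cmod_binom_coef_geom. }
  intros n.
  assert (Hsum : forall N, Csum (fun m => binom_coef a m * RtoC (1 / 2) ^ m)%C N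
                           = (binom_trunc_normalized a N (1 / 2) * Rcpow 2 a)%C).
  { intros N; unfold binom_trunc_normalized.
    rewrite <- Cmult_assoc, <- Rcpow_mul_l by lra.
    replace ((1 - 1 / 2) * 2) with 1 by field; rewrite Rcpow_1_l, Cmult_1_r.
    apply Csum_ext; intros i _; now rewrite RtoC_pow. }
  rewrite Hsum.
  replace (binom_trunc_normalized a (S n) (1 / 2) * Rcpow 2 a - Rcpow 2 a)%C
    with ((binom_trunc_normalized a (S n) (1 / 2) - binom_trunc_normalized a (S n) 0)
          * Rcpow 2 a)%C by (rewrite binom_trunc_normalized_0; to_C; ring).
  rewrite Cmod_mult.
  eapply Rle_trans.
  { apply Rmult_le_compat_r; [apply Cmod_ge_0|].
    eapply (Cmod_sub_le_deriv_bound _ _ 0 (1 / 2)); [lra | |].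
    - intros t Ht; apply has_Cderive_binom_trunc_normalized; lra.
    - intros t Ht; now apply Cmod_binom_trunc_normalized_deriv_le. }
  unfold K; apply Req_le; field.
Qed.

(** * The contiguous relation and the closed form *)

Lemma hyp2f1_term_O (a b c z : C) : hyp2f1_term a b c z O = RtoC 1.
Proof. rewrite hyp2f1_term_unfold; simpl; to_C; field; apply RtoC_neq0, R1_neq_R0. Qed.

Lemma hyp2f1_term_contiguous (a b z : C) (n : nat) :
  not_neg_int a ->
  hyp2f1_term a (b + 1)%C (a + 1)%C z (S n) =
  (hyp2f1_term a b (a + 1) z (S n)
   + a * z / (a + 1) * hyp2f1_term (a + 1) (b + 1) (a + 1 + 1) z n)%C.
Proof.
  intros Ha.
  pose proof (not_neg_int_add_neq0 a 0 Ha) as Ha1; simpl INR in Ha1.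
  assert (Hpoch : poch (a + 1 + 1)%C n <> RtoC 0).
  { apply poch_neq0; intros j _.
    replace (a + 1 + 1 + INR j)%C with (a + 1 + INR (S j))%C
      by (rewrite S_INR, RtoC_plus; ring).
    now apply not_neg_int_succ_add_neq0. }
  rewrite !hyp2f1_term_unfold, poch_pascal, (poch_Sl a n), (poch_Sl (a + 1) n), INR_fact_S_C.
  simpl Cpow.
  pose proof (INR_fact_neq0_C n); pose proof (INR_S_neq0_C n).
  to_C; field; auto.
Qed.

Lemma hyp2f1_contiguous (a b z l1 l2 : C) :
  not_neg_int a ->
  Cseries_sum (hyp2f1_term a b (a + 1)%C z) l1 ->
  Cseries_sum (hyp2f1_term (a + 1)%C (b + 1)%C (a + 1 + 1)%C z) l2 ->
  Cseries_sum (hyp2f1_term a (b + 1)%C (a + 1)%C z) (l1 + a * z / (a + 1) * l2)%C.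
Proof.
  intros Ha H1 H2.
  pose proof (Cseries_sum_shift _ _ (Cseries_sum_scal (a * z / (a + 1)) _ _ H2)) as H2'.
  eapply Cseries_sum_ext; [| reflexivity | apply (Cseries_sum_add _ _ _ _ H1 H2')].
  intros [|n]; simpl Cshift.
  - rewrite !hyp2f1_term_O; to_C; ring.
  - symmetry; now apply hyp2f1_term_contiguous.
Qed.

Definition binom_sum (n : nat) (f : nat -> C) : C :=
  Csum (fun i => Binomial.C n i * f i)%C (S n).

Lemma binom_C_n_0 (n : nat) : Binomial.C n 0 = 1.
Proof.
  unfold Binomial.C; rewrite Nat.sub_0_r; simpl; field; apply INR_fact_neq_0.
Qed.

Lemma binom_C_n_n (n : nat) : Binomial.C n n = 1.
Proof.
  unfold Binomial.C; rewrite Nat.sub_diag; simpl; field; apply INR_fact_neq_0.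
Qed.

Lemma binom_sum_S (n : nat) (f : nat -> C) :
  binom_sum (S n) f = (binom_sum n f + binom_sum n (fun i => f (S i)))%C.
Proof.
  unfold binom_sum.
  rewrite Csum_S, Csum_Sl, (Csum_Sl _ n), (Csum_S _ n).
  rewrite (Csum_ext (fun i => Binomial.C (S n) (S i) * f (S i))%C
             (fun i => Binomial.C n i * f (S i) + Binomial.C n (S i) * f (S i))%C).
  - rewrite Csum_add, !binom_C_n_0, !binom_C_n_n; to_C; ring.
  - intros i Hi; rewrite <- Binomial.pascal, RtoC_plus by assumption; ring.
Qed.

Lemma binom_sum_1 (n : nat) : binom_sum n (fun _ => RtoC 1) = RtoC (2 ^ n).
Proof.
  induction n as [|n IH].
  - unfold binom_sum; simpl; rewrite binom_C_n_0; to_C; ring.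
  - rewrite binom_sum_S, IH; simpl; rewrite RtoC_mult; to_C; ring.
Qed.

(* The 0-th weight is 1 rather than a/a, which matters for a = 0. *)
Definition hyp_weight (a : C) (i : nat) : C :=
  match i with O => RtoC 1 | S _ => (a / (a + INR i))%C end.

Lemma binom_sum_hyp_weight_succ (n : nat) (a : C) :
  not_neg_int a ->
  binom_sum n (fun i => hyp_weight a (S i)) = (a / (a + 1) * binom_sum n (hyp_weight (a + 1)))%C.
Proof.
  intros Ha; unfold binom_sum; rewrite <- Csum_scal.
  apply Csum_ext; intros [|i] _; cbn [hyp_weight].
  - pose proof (not_neg_int_add_neq0 a 0 Ha) as Ha1; simpl INR in *; to_C; field; auto.
  - pose proof (not_neg_int_add_neq0 a 0 Ha) as Ha1; simpl INR in Ha1.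
    pose proof (not_neg_int_add_neq0 a (S i) Ha).
    replace (a + 1 + INR (S i))%C with (a + INR (S (S i)))%C
      by (rewrite (S_INR (S i)), RtoC_plus; ring).
    to_C; field; auto.
Qed.

Lemma hyp2f1_half_closed_form (n : nat) (a : C) :
  not_neg_int a ->
  Cseries_sum (hyp2f1_term a (a + INR (S n))%C (a + 1)%C (RtoC (1 / 2)))
              (Rcpow 2 a * binom_sum n (hyp_weight a))%C.
Proof.
  revert a; induction n as [|n IH]; intros a Ha.
  - eapply Cseries_sum_ext; [| | apply (binom_series_half a)].
    + intros m; rewrite hyp2f1_term_unfold; unfold binom_coef; simpl INR.
      assert (poch (a + 1)%C m <> RtoC 0)
        by (apply poch_neq0; intros j _; now apply not_neg_int_succ_add_neq0).
      pose proof (INR_fact_neq0_C m); to_C; field; auto.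
    + unfold binom_sum; rewrite Csum_S, Csum_O, binom_C_n_0; simpl; to_C; ring.
  - replace (a + INR (S (S n)))%C with (a + INR (S n) + 1)%C
      by (rewrite (S_INR (S n)), RtoC_plus; ring).
    pose proof (IH (a + 1)%C (not_neg_int_succ a Ha)) as IH1.
    replace (a + 1 + INR (S n))%C with (a + INR (S n) + 1)%C in IH1 by ring.
    eapply Cseries_sum_ext; [reflexivity | | apply (hyp2f1_contiguous _ _ _ _ _ Ha (IH a Ha) IH1)].
    rewrite binom_sum_S, binom_sum_hyp_weight_succ, Rcpow_succ by (auto; lra).
    pose proof (not_neg_int_add_neq0 a 0 Ha) as Ha1; simpl INR in Ha1.
    assert (RtoC 2 <> 0%C) by (apply RtoC_neq0; lra).
    rewrite RtoC_div by lra; to_C; field; auto.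
Qed.

Lemma binom_sum_hyp_weight (n : nat) (a : C) :
  not_neg_int a ->
  binom_sum n (hyp_weight a) =
  (RtoC (2 ^ n) - Csum (fun j => RtoC (INR (fact n) / (INR (fact j) * INR (fact (n - S j))))
                                 * / (a + INR (S j))) n)%C.
Proof.
  intros Ha; rewrite <- binom_sum_1; unfold binom_sum; rewrite !Csum_Sl.
  rewrite (Csum_ext (fun i => Binomial.C n (S i) * hyp_weight a (S i))%C
             (fun i => Binomial.C n (S i) * 1
                       - RtoC (INR (fact n) / (INR (fact i) * INR (fact (n - S i))))
                         * / (a + INR (S i)))%C).
  - rewrite Csum_sub; cbn [hyp_weight]; to_C; ring.
  - intros j Hj; cbn [hyp_weight].
    assert (Hbinom : INR (fact n) / (INR (fact j) * INR (fact (n - S j)))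
                     = Binomial.C n (S j) * INR (S j)).
    { unfold Binomial.C; rewrite fact_simpl, mult_INR.
      pose proof (INR_fact_neq_0 j); pose proof (INR_fact_neq_0 (n - S j)).
      pose proof (not_0_INR (S j) (Nat.neq_succ_0 j)); field; auto. }
    rewrite Hbinom, RtoC_mult.
    pose proof (not_neg_int_add_neq0 a j Ha); to_C; field; auto.
Qed.

(* Restores the names [RtoC], [Copp] and [Cinv] of [Defs], shadowed by Coquelicot. *)
From Pilot Require Import Defs.

Theorem mainTheorem2 (k : nat) (a : Cplx) (hk : (1 <= k)%nat)
  (ha : forall n : nat, a <> RtoC (- INR (S n))) :
  Cseries_sum
    (hyp2f1_term a (Cadd a (RtoC (INR k))) (Cadd a (RtoC 1)) (RtoC (1 / 2)))
    (Cmul (Cpow2 a)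
       (Cadd (RtoC (2 ^ (k - 1)))
          (Copp (Csum (fun j =>
                   Cmul (RtoC (INR (fact (k - 1)) /
                               (INR (fact ((S j) - 1)) * INR (fact (k - (S j) - 1)))))
                        (Cinv (Cadd a (RtoC (INR (S j))))))
                 (k - 1))))).
Proof.
  destruct k as [|n]; [lia|].
  eapply Cseries_sum_ext; [reflexivity | | apply (hyp2f1_half_closed_form n a ha)].
  rewrite binom_sum_hyp_weight by exact ha.
  replace (S n - 1)%nat with n by lia; to_C; unfold Cminus.
  do 3 f_equal; apply Csum_ext; intros j Hj.
  rewrite Cinv_Coquelicot.
  replace (S j - 1)%nat with j by lia; now replace (S n - S j - 1)%nat with (n - S j)%nat by lia.
Qed.
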